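(* Let $H=F+G$ where $F$ satisfies the Lipschitz condition in (A1) and \[ G(\theta,x)=\sum_{j=1}^N\dot g_j(\theta,x)\,\mathbb{1}_{\bigcap_{i=1}^m\{x^{(i)}\in I_{i,j}(\theta)\}} \] is lower semi-continuous, with $N\ge1$, where each $\dot g_j:\mathbb{R}^d\times\mathbb{R}^m\to\mathbb{R}^d$ satisfies, for some $L_3,L_4,K_2>0$ and all $\theta,\theta',x,x'$, $|\dot g_j(\theta,x)-\dot g_j(\theta',x')|\le(1+|x|+|x'|)^\rho(L_3|\theta-\theta'|+L_4|x-x'|)$ and $|\dot g_j(\theta,x)|\le K_2$, and each interval $I_{i,j}(\theta)$ is of one of the forms $(-\infty,\bar g^{(i)}_j(\theta))$, $(\bar g^{(i)}_j(\theta),\infty)$, $(\tilde g^{(i)}_j(\theta),\hat g^{(i)}_j(\theta))$ with $\bar g^{(i)}_j,\tilde g^{(i)}_j,\hat g^{(i)}_j:\mathbb{R}^d\to\mathbb{R}$ Lipschitz continuous. Suppose $\mathbb{E}|X_0|^{\rho}<\infty$ and that for each $i=1,\dots,m$ the coordinate $X_0^{(i)}$ has a continuous and bounded density. Then there is $L>0$ such that $\mathbb{E}|H(\theta,X_0)-H(\theta',X_0)|\le L|\theta-\theta'|$ for all $\theta,\theta'\in\mathbb{R}^d$.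
   Context: $X_0$ is an $\mathbb{R}^m$-valued random variable with coordinates $X_0^{(1)},\dots,X_0^{(m)}$; $x^{(i)}$ denotes the $i$-th coordinate of $x\in\mathbb{R}^m$. The Lipschitz condition in (A1): there are $L_1,L_2>0$, $\rho\ge0$ with $|F(\theta,x)-F(\theta',x')|\le(1+|x|+|x'|)^\rho(L_1|\theta-\theta'|+L_2|x-x'|)$ for all $\theta,\theta'\in\mathbb{R}^d$, $x,x'\in\mathbb{R}^m$. *)

From HB Require Import structures.
From mathcomp Require Import all_boot all_order all_algebra.
From mathcomp Require Import all_classical all_reals all_analysis.
Set Implicit Arguments. Unset Strict Implicit. Unset Printing Implicit Defensive.
Import Order.TTheory GRing.Theory Num.Theory.
Import numFieldNormedType.Exports.
Local Open Scope ring_scope.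

Definition enorm (R : realType) (n : nat) (v : 'rV[R]_n) : R :=
  Num.sqrt (\sum_(i < n) v ord0 i ^+ 2).

Definition lipschitzR (R : realType) (d : nat) (g : 'rV[R]_d -> R) : Prop :=
  exists K : R, 0 <= K /\
    forall t t' : 'rV[R]_d, `|g t - g t'| <= K * enorm (t - t').

Inductive iform (R : realType) (d : nat) :=
| IvLt of ('rV[R]_d -> R)                     (* (-oo, gbar(theta)) *)
| IvGt of ('rV[R]_d -> R)                     (* (gbar(theta), +oo) *)
| IvBetween of ('rV[R]_d -> R) & ('rV[R]_d -> R). (* (gtilde(theta), ghat(theta)) *)

Definition in_iform (R : realType) (d : nat) (I : iform R d)
  (t : 'rV[R]_d) (y : R) : bool :=
  match I with
  | IvLt g => y < g t
  | IvGt g => g t < y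
  | IvBetween a b => (a t < y) && (y < b t)
  end.

Definition iform_lipschitz (R : realType) (d : nat) (I : iform R d) : Prop :=
  match I with
  | IvLt g => lipschitzR g
  | IvGt g => lipschitzR g
  | IvBetween a b => lipschitzR a /\ lipschitzR b
  end.

Definition Gfun (R : realType) (d m N : nat)
  (gdot : 'I_N -> 'rV[R]_d -> 'rV[R]_m -> 'rV[R]_d)
  (I : 'I_m -> 'I_N -> iform R d) (t : 'rV[R]_d) (x : 'rV[R]_m) : 'rV[R]_d :=
  \sum_(j < N)
     (if [forall i : 'I_m, in_iform (I i j) t (x ord0 i)] then gdot j t x else 0).

(* Write D(t,t',x) = H(t,x) - H(t',x) and dl = |t - t'|.  The Lipschitz part F
   and the smooth factors gdot_j contribute at most a multiple of
   (1 + |x| + |x|)^rho * dl, which has finite expectation because E|X_0|^rho < oo.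
   The discontinuous part can only contribute where some indicator
   1{x^(i) in I_{i,j}(theta)} switches between theta = t and theta = t'; then
   x^(i) lies in the segment swept by one of the (Lipschitz) endpoints of
   I_{i,j}, an interval of length <= K |t - t'|, whose probability is at most
   M K |t - t'| since X_0^(i) has a density bounded by M. *)

From HB Require Import structures.
From mathcomp Require Import all_boot all_order all_algebra.
From mathcomp Require Import all_classical all_reals all_analysis.
From mathcomp Require Import ring lra measurable_realfun.
Import Order.TTheory GRing.Theory Num.Theory.
Import numFieldNormedType.Exports.
Local Open Scope ring_scope.
Local Open Scope classical_set_scope.
Set Implicit Arguments. Unset Strict Implicit.

(* The Euclidean norm enorm against the sup norm `|_| that MathComp-Analysis
   puts on row vectors: `|v| <= enorm v <= n * `|v|.  This lets us use the
   library's triangle inequalities for `|_| and transfer them to enorm. *)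
Section EuclideanNorm.
Variables (R : realType) (n : nat).
Implicit Types v : 'rV[R]_n.

Lemma enorm_ge0 v : 0 <= enorm v.
Proof. exact: sqrtr_ge0. Qed.

Lemma enormN v : enorm (- v) = enorm v.
Proof. by rewrite /enorm; congr Num.sqrt; apply: eq_bigr => i _; rewrite mxE sqrrN. Qed.

Lemma enormB0 v : enorm (v - v) = 0.
Proof. by rewrite subrr /enorm big1 ?sqrtr0 // => i _; rewrite mxE expr0n. Qed.

Lemma coord_le_enorm v i : `|v ord0 i| <= enorm v.
Proof.
rewrite /enorm -sqrtr_sqr ler_sqrt; last by apply: sumr_ge0 => j _; exact: sqr_ge0.
by rewrite (bigD1 i) //= lerDl; apply: sumr_ge0 => j _; exact: sqr_ge0.
Qed.

Lemma coord_le_normr v i : `|v ord0 i| <= `|v|.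
Proof.
rewrite [leRHS]/Num.Def.normr /= mx_normrE; apply/bigmax_geP; right => /=.
by exists (ord0, i).
Qed.

Lemma normr_le_enorm v : `|v| <= enorm v.
Proof.
rewrite [leLHS]/Num.Def.normr /= mx_normrE; apply: bigmax_le => [|[i j] _ /=].
  exact: enorm_ge0.
by rewrite (ord1 i); exact: coord_le_enorm.
Qed.

(* sum_i v_i^2 <= n |v|^2 <= (n |v|)^2. *)
Lemma enorm_le_normr v : enorm v <= n%:R * `|v|.
Proof.
have nv0 : 0 <= n%:R * `|v| by rewrite mulr_ge0.
rewrite /enorm -(ger0_norm nv0) -sqrtr_sqr ler_sqrt ?sqr_ge0 //.
apply: (@le_trans _ _ (\sum_(i < n) `|v| ^+ 2)).
  apply: ler_sum => i _; rewrite -real_normK ?num_real //.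
  by rewrite lerXn2r ?nnegrE ?coord_le_normr.
rewrite sumr_const card_ord -[X in X <= _]mulr_natl exprMn.
apply: ler_wpM2r; first exact: sqr_ge0.
by rewrite -natrX ler_nat; case: n => // k; rewrite expnS leq_pmulr ?expn_gt0.
Qed.

End EuclideanNorm.

Lemma neq_forall_le_sum (R : numDomainType) (m : nat) (P Q : 'I_m -> bool) :
  (([forall i, P i] != [forall i, Q i]) : nat)%:R <=
  \sum_(i < m) (((P i != Q i) : nat)%:R : R).
Proof.
have [/existsP [i PQi] | /existsPn PQ] := boolP [exists i, P i != Q i].
  rewrite (bigD1 i) //= PQi -[X in X <= _]addr0 lerD ?sumr_ge0 //.
  by case: (_ != _).
have -> : [forall i, P i] = [forall i, Q i].
  by apply: eq_forallb => i; apply/eqP; rewrite -[_ == _]negbK PQ.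
by rewrite eqxx sumr_ge0.
Qed.

Section BoundaryCrossing.
Variables (R : realType) (d : nat).
Implicit Types (J : iform R d) (t : 'rV[R]_d).

(* The endpoint functions of an interval of admissible form, indexed by a
   boolean (both indices give the unique endpoint of a half-line). *)
Definition iform_bnd (b : bool) J : 'rV[R]_d -> R :=
  match J with
  | IvLt g | IvGt g => g
  | IvBetween a c => if b then a else c
  end.

Definition swept (g : 'rV[R]_d -> R) t t' : set R :=
  `[Num.min (g t) (g t'), Num.max (g t) (g t')]%classic.

Lemma swept_length (g : 'rV[R]_d -> R) t t' :
  Num.max (g t) (g t') - Num.min (g t) (g t') = `|g t - g t'|.
Proof.
case: leP => h; first by rewrite distrC ger0_norm // subr_ge0.
by rewrite ger0_norm // subr_ge0 ltW.
Qed.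

Lemma ltr_change_between (u v y : R) :
  (y < u) != (y < v) -> Num.min u v <= y <= Num.max u v.
Proof.
by case: (leP u v) => uv; case: (ltP y u) => yu; case: (ltP y v) => yv //= _;
  first [exfalso; lra | lra].
Qed.

Lemma gtr_change_between (u v y : R) :
  (u < y) != (v < y) -> Num.min u v <= y <= Num.max u v.
Proof.
by case: (leP u v) => uv; case: (ltP u y) => yu; case: (ltP v y) => yv //= _;
  first [exfalso; lra | lra].
Qed.

Lemma membership_change_swept J t t' y :
  in_iform J t y != in_iform J t' y -> exists b, swept (iform_bnd b J) t t' y.
Proof.
rewrite /swept; case: J => [g|g|a c] /=.
- by move/ltr_change_between => yJ; exists true; rewrite /= in_itv.
- by move/gtr_change_between => yJ; exists true; rewrite /= in_itv.
- have [/gtr_change_between ya _|] := boolP ((a t < y) != (a t' < y)).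
    by exists true; rewrite /= in_itv.
  rewrite negbK => /eqP <-; case: (a t < y) => //= /ltr_change_between yc.
  by exists false; rewrite /= in_itv.
Qed.

Lemma membership_change_le_indic J t t' y :
  ((in_iform J t y != in_iform J t' y) : nat)%:R <=
  \sum_(b : bool) \1_(swept (iform_bnd b J) t t') y :> R.
Proof.
have indic_ge0 (b : bool) : 0 <= \1_(swept (iform_bnd b J) t t') y :> R.
  by rewrite indicE.
have [/membership_change_swept [b yb]|_] := boolP (in_iform J t y != in_iform J t' y).
  rewrite (bigD1 b) //= indicE (mem_set yb) /= lerDl.
  by apply: sumr_ge0 => b' _; exact: indic_ge0.
by apply: sumr_ge0 => b _; exact: indic_ge0.
Qed.

Lemma iform_lipschitz_bnd J : iform_lipschitz J -> exists K, 0 <= K /\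
  forall b t t', `|iform_bnd b J t - iform_bnd b J t'| <= K * enorm (t - t').
Proof.
case: J => [g|g|a c] /=; try by move=> [K [K0 gK]]; exists K.
move=> [[Ka [Ka0 aK]] [Kc [Kc0 cK]]]; exists (Ka + Kc); split; first exact: addr_ge0.
move=> [] t t' /=; [apply: le_trans (aK t t') _ | apply: le_trans (cK t t') _];
  by apply: ler_wpM2r; rewrite ?enorm_ge0 ?lerDl ?lerDr.
Qed.

End BoundaryCrossing.

(* Growth of the weight: (1 + 2a)^rho <= 3^rho (1 + a^rho), since
   1 + 2a <= 3 max(1, a). *)
Lemma powR_growth (R : realType) (rho a : R) : 0 <= rho -> 0 <= a ->
  (1 + a + a) `^ rho <= 3 `^ rho * (1 + a `^ rho).
Proof.
move=> rho0 a0.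
have m0 : 0 <= Num.max 1 a by rewrite le_max ler01.
apply: (@le_trans _ _ ((3 * Num.max 1 a) `^ rho)).
  apply: ge0_ler_powR => //; rewrite ?nnegrE ?mulr_ge0 //; first lra.
  by case: (leP 1 a) => h; lra.
rewrite powRM // ler_wpM2l ?powR_ge0 //.
case: (leP 1 a) => _; first by rewrite lerDr ler01.
by rewrite powR1 lerDl powR_ge0.
Qed.

Section IncrementBound.
Variables (R : realType) (d m N : nat).
Implicit Types (t : 'rV[R]_d) (x : 'rV[R]_m).

Definition crossings (I : 'I_m -> 'I_N -> iform R d) t t' x : R :=
  \sum_(j < N) \sum_(i < m) \sum_(b : bool)
     \1_(swept (iform_bnd b (I i j)) t t') (x ord0 i).

Lemma switched_increment (u v : 'rV[R]_d) (c c' : bool) (a K : R) :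
  enorm (u - v) <= a -> enorm u <= K -> enorm v <= K ->
  enorm ((if c then u else 0) - (if c' then v else 0)) <= a + K * (c != c')%:R.
Proof.
move=> uva uK vK; have a0 : 0 <= a by apply: le_trans uva; exact: enorm_ge0.
case: c; case: c' => /=; rewrite ?mulr0 ?mulr1 ?addr0 //.
- by rewrite subr0; apply: le_trans uK _; rewrite lerDr.
- by rewrite sub0r enormN; apply: le_trans vK _; rewrite lerDr.
- by rewrite enormB0.
Qed.

Variables (rho L1 L2 L3 L4 K2 : R).
Variables (F : 'rV[R]_d -> 'rV[R]_m -> 'rV[R]_d)
  (gdot : 'I_N -> 'rV[R]_d -> 'rV[R]_m -> 'rV[R]_d)
  (I : 'I_m -> 'I_N -> iform R d).
Hypothesis rho_ge0 : 0 <= rho.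
Hypothesis L1_ge0 : 0 <= L1.
Hypothesis L3_ge0 : 0 <= L3.
Hypothesis K2_ge0 : 0 <= K2.
Hypothesis F_lip : forall t t' x x',
  enorm (F t x - F t' x') <=
  (1 + enorm x + enorm x') `^ rho * (L1 * enorm (t - t') + L2 * enorm (x - x')).
Hypothesis gdot_lip : forall j t t' x x',
  enorm (gdot j t x - gdot j t' x') <=
  (1 + enorm x + enorm x') `^ rho * (L3 * enorm (t - t') + L4 * enorm (x - x')).
Hypothesis gdot_bounded : forall j t x, enorm (gdot j t x) <= K2.

Let weight x := (1 + enorm x + enorm x) `^ rho.

Lemma F_increment t t' x : enorm (F t x - F t' x) <= weight x * (L1 * enorm (t - t')).
Proof. by have := F_lip t t' x x; rewrite enormB0 mulr0 addr0. Qed.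

Lemma Gfun_increment t t' x :
  `|Gfun gdot I t x - Gfun gdot I t' x| <=
  N%:R * (weight x * (L3 * enorm (t - t'))) + K2 * crossings I t t' x.
Proof.
rewrite /Gfun -sumrB; apply: le_trans (ler_norm_sum _ _ _) _.
rewrite /crossings mulr_sumr mulr_natl -[X in _ *+ X]card_ord -sumr_const -big_split /=.
apply: ler_sum => j _; apply: le_trans (normr_le_enorm _) _.
have gdot_increment : enorm (gdot j t x - gdot j t' x) <= weight x * (L3 * enorm (t - t')).
  by have := gdot_lip j t t' x x; rewrite enormB0 mulr0 addr0.
apply: le_trans (switched_increment _ _ gdot_increment (gdot_bounded _ _ _)
  (gdot_bounded _ _ _)) _.
rewrite lerD2l ler_wpM2l //.
apply: le_trans (@neq_forall_le_sum _ _ (fun i => in_iform (I i j) t (x ord0 i))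
  (fun i => in_iform (I i j) t' (x ord0 i))) _.
by apply: ler_sum => i _; exact: membership_change_le_indic.
Qed.

Lemma increment_bound t t' x :
  enorm ((F t x + Gfun gdot I t x) - (F t' x + Gfun gdot I t' x)) <=
  d%:R * (L1 + N%:R * L3) * 3 `^ rho * enorm (t - t') * (1 + enorm x `^ rho) +
  d%:R * K2 * crossings I t t' x.
Proof.
have weight_le : weight x <= 3 `^ rho * (1 + enorm x `^ rho).
  exact: powR_growth (enorm_ge0 x).
rewrite opprD addrACA; apply: le_trans (enorm_le_normr _) _.
apply: le_trans (ler_wpM2l (ler0n _ _) (ler_normD _ _)) _.
apply: le_trans (ler_wpM2l (ler0n _ _)
  (lerD (le_trans (normr_le_enorm _) (F_increment t t' x)) (Gfun_increment t t' x))) _.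
set c := crossings I t t' x; set dl := enorm (t - t').
set lhs := (X in X <= _); set rhs := (X in _ <= X).
have -> : lhs = d%:R * (L1 + N%:R * L3) * dl * weight x + d%:R * K2 * c by rewrite /lhs; ring.
have -> : rhs = d%:R * (L1 + N%:R * L3) * dl * (3 `^ rho * (1 + enorm x `^ rho)) +
  d%:R * K2 * c by rewrite /rhs; ring.
by rewrite lerD2r ler_wpM2l // !mulr_ge0 ?addr_ge0 ?mulr_ge0 ?enorm_ge0.
Qed.

End IncrementBound.

Section Integrals.
Local Open Scope ereal_scope.
Variables (dT : measure_display) (T : measurableType dT) (R : realType).
Variable mu : {measure set T -> \bar R}.

(* Monotonicity of the integral of nonnegative functions; no measurability is
   required, which matters since G need not be measurable in x. *)
Lemma ge0_le_integral_nomeas (f1 f2 : T -> \bar R) :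
  (forall w, 0 <= f1 w) -> (forall w, f1 w <= f2 w) ->
  \int[mu]_w f1 w <= \int[mu]_w f2 w.
Proof.
move=> f10 f12; have f20 w : 0 <= f2 w by apply: le_trans (f12 w).
rewrite !ge0_integralTE //; apply: ereal_sup_le => _ [h hf1 <-].
by exists h => //= w; exact: le_trans (hf1 w) (f12 w).
Qed.

Lemma ge0_integral_sumEFin (J : Type) (s : seq J) (f : J -> T -> R) :
  (forall k, measurable_fun setT (f k)) -> (forall k w, (0 <= f k w)%R) ->
  \int[mu]_w (\sum_(k <- s) f k w)%:E = \sum_(k <- s) \int[mu]_w (f k w)%:E.
Proof.
move=> mf f0; under eq_integral do rewrite -sumEFin.
apply: ge0_integral_sum => // [k|k w _]; last by rewrite lee_fin.
exact/measurable_EFinP.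
Qed.

End Integrals.

Lemma density_itv_bound (R : realType) (Pr : set R -> \bar R) (f : R -> R) (M : R) :
  continuous f -> (forall y, 0 <= f y) -> (forall y, `|f y| <= M) ->
  (forall A : set R, measurable A ->
     Pr A = (\int[lebesgue_measure]_(y in A) (f y)%:E)%E) ->
  forall a b, a <= b -> (Pr `[a, b]%classic <= (M * (b - a))%:E)%E.
Proof.
move=> cf f0 fM Prf a b ab; rewrite Prf; last exact: measurable_itv.
apply: (@le_trans _ _ (\int[lebesgue_measure]_(y in `[a, b]%classic) (cst M%:E) y)%E).
  apply: (@ge0_le_integral _ _ _ lebesgue_measure _ (measurable_itv `[a, b]%R)) => //.
  - by move=> y _; rewrite lee_fin.
  - apply/measurable_EFinP; apply: measurable_funTS.
    exact: continuous_measurable_fun.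
  - by move=> y _; rewrite lee_fin (le_trans (ler_norm _) (fM y)).
rewrite integral_cst /=; last exact: measurable_itv.
rewrite lebesgue_measure_itv /= lte_fin; case: ltP => _.
  by rewrite -EFinD -EFinM mulrC.
by rewrite mule0 lee_fin mulr_ge0 ?subr_ge0 // (le_trans (normr_ge0 _) (fM 0)).
Qed.

Section Expectations.
Local Open Scope ereal_scope.
Variables (dT : measure_display) (T : measurableType dT) (R : realType).
Variable P : probability T R.

Lemma expectation_affine (g : T -> R) (c q : R) :
  measurable_fun setT g -> (forall w, (0 <= g w)%R) -> (0 <= c)%R ->
  \int[P]_w (g w)%:E = q%:E -> \int[P]_w (c * (1 + g w))%:E = (c * (1 + q))%:E.
Proof.
move=> mg g0 c0 Eg.
under eq_integral do rewrite EFinM.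
rewrite ge0_integralZl_EFin //; last first.
- by apply/measurable_EFinP; exact: measurable_funD.
- by move=> w _; rewrite lee_fin addr_ge0.
under eq_integral do rewrite EFinD.
rewrite ge0_integralD //; last 2 first.
- by move=> w _; rewrite lee_fin.
- exact/measurable_EFinP.
have PT : (P : {measure set T -> \bar R}) [set: T] = 1 by exact: probability_setT.
have := integral_cst P measurableT 1%:E; rewrite /cst PT mule1 => ->.
by rewrite Eg -EFinD -EFinM.
Qed.

Lemma swept_probability (d : nat) (Y : T -> R) (M K : R) (g : 'rV[R]_d -> R) :
  (forall a b, (a <= b)%R -> P (Y @^-1` `[a, b]%classic) <= (M * (b - a))%:E) ->
  (0 <= M)%R -> (forall t t', `|g t - g t'| <= K * enorm (t - t'))%R ->
  forall t t', P (Y @^-1` swept g t t') <= (M * K * enorm (t - t'))%:E.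
Proof.
move=> Yitv M0 gK t t'.
have minmax : (Num.min (g t) (g t') <= Num.max (g t) (g t'))%R.
  by case: (leP (g t) (g t')) => // /ltW.
apply: le_trans (Yitv _ _ minmax) _.
by rewrite lee_fin swept_length -mulrA ler_wpM2l.
Qed.

Lemma integral_indic_comp (Y : T -> R) (S : set R) :
  measurable_fun setT Y -> measurable S ->
  \int[P]_w (\1_S (Y w) : R)%:E = P (Y @^-1` S).
Proof.
move=> mY mS; have mYS : measurable (Y @^-1` S) by rewrite -[_ @^-1` _]setTI; exact: mY.
by rewrite -[Y @^-1` S]setIT -integral_indic.
Qed.

Variables (d m N : nat) (X : 'I_m -> T -> R) (I : 'I_m -> 'I_N -> iform R d).
Hypothesis mX : forall i, measurable_fun setT (X i).

Lemma measurable_enorm_row : measurable_fun setT (fun w => enorm (\row_i X i w)).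
Proof.
have -> : (fun w => enorm (\row_i X i w)) =
    Num.sqrt \o (fun w => \sum_(i < m) X i w ^+ 2)%R.
  by apply/funext => w; rewrite /enorm /=; congr Num.sqrt; apply: eq_bigr => i _; rewrite mxE.
apply: measurableT_comp; first exact: (continuous_measurable_fun (@sqrt_continuous R)).
by apply: measurable_sum => i; exact: measurable_funX.
Qed.

Lemma measurable_crossings (t t' : 'rV[R]_d) :
  measurable_fun setT (fun w => crossings I t t' (\row_i X i w)).
Proof.
apply: measurable_sum => j; apply: measurable_sum => i; apply: measurable_sum => b.
under eq_fun do rewrite mxE.
by apply: measurableT_comp (mX i); apply: measurable_indic; exact: measurable_itv.
Qed.

Lemma expectation_crossings (t t' : 'rV[R]_d) (p : 'I_m -> 'I_N -> R) :
  (forall i j b, P (X i @^-1` swept (iform_bnd b (I i j)) t t') <= (p i j)%:E) ->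
  \int[P]_w (crossings I t t' (\row_i X i w))%:E <=
  (2 * \sum_(j < N) \sum_(i < m) p i j)%:E.
Proof.
move=> swept_p.
have mS i j b : measurable (swept (iform_bnd b (I i j)) t t') by exact: measurable_itv.
have mindic i j b : measurable_fun setT
    (fun w => \1_(swept (iform_bnd b (I i j)) t t') (X i w) : R).
  by apply: measurableT_comp (mX i); exact: measurable_indic.
have indic_ge0 i j b w : (0 <= \1_(swept (iform_bnd b (I i j)) t t') (X i w) :> R)%R.
  by rewrite indicE.
rewrite (eq_integral (fun w => (\sum_(j < N) \sum_(i < m) \sum_(b : bool)
    \1_(swept (iform_bnd b (I i j)) t t') (X i w))%:E)); last first.
  by move=> w _; congr EFin; apply: eq_bigr => j _; apply: eq_bigr => i _;
    rewrite mxE.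
rewrite ge0_integral_sumEFin; last 2 first.
- by move=> j; apply: measurable_sum => i; apply: measurable_sum => b.
- by move=> j w; apply: sumr_ge0 => i _; apply: sumr_ge0 => b _.
rewrite mulr_sumr -sumEFin; apply: lee_sum => j _.
rewrite ge0_integral_sumEFin; last 2 first.
- by move=> i; apply: measurable_sum => b.
- by move=> i w; apply: sumr_ge0 => b _.
rewrite mulr_sumr -sumEFin; apply: lee_sum => i _.
rewrite ge0_integral_sumEFin // big_bool !integral_indic_comp //.
by rewrite mulr_natl mulr2n EFinD; apply: leeD; exact: swept_p.
Qed.

Lemma expectation_dominator (rho c B q : R) (t t' : 'rV[R]_d) (p : 'I_m -> 'I_N -> R) :
  (0 <= c)%R -> (0 <= B)%R ->
  \int[P]_w (enorm (\row_i X i w) `^ rho)%:E = q%:E ->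
  (forall i j b, P (X i @^-1` swept (iform_bnd b (I i j)) t t') <= (p i j)%:E) ->
  \int[P]_w (c * (1 + enorm (\row_i X i w) `^ rho) +
             B * crossings I t t' (\row_i X i w))%:E <=
  (c * (1 + q) + B * (2 * \sum_(j < N) \sum_(i < m) p i j))%:E.
Proof.
move=> c0 B0 moment swept_p.
have mpow : measurable_fun setT (fun w => enorm (\row_i X i w) `^ rho)%R.
  exact: measurableT_comp (measurable_powR rho) measurable_enorm_row.
have crossings_ge0 w : (0 <= crossings I t t' (\row_i X i w))%R.
  by do 3!(apply: sumr_ge0 => ? _); rewrite indicE.
under eq_integral do rewrite EFinD.
rewrite ge0_integralD //; last 4 first.
- by move=> w _; rewrite lee_fin mulr_ge0 ?addr_ge0 ?powR_ge0.
- by apply/measurable_EFinP; apply: measurable_funM => //; exact: measurable_funD.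
- by move=> w _; rewrite lee_fin mulr_ge0.
- by apply/measurable_EFinP; apply: measurable_funM => //; exact: measurable_crossings.
rewrite (expectation_affine mpow _ c0 moment) ?EFinD ?leeD2l //; last by move=> w; exact: powR_ge0.
under eq_integral do rewrite EFinM.
rewrite ge0_integralZl_EFin //; last 2 first.
- by move=> w _; rewrite lee_fin.
- by apply/measurable_EFinP; exact: measurable_crossings.
by rewrite EFinM lee_wpmul2l ?lee_fin // expectation_crossings.
Qed.

End Expectations.

Section MeanIncrement.
Variables (R : realType) (dT : measure_display) (T : measurableType dT).
Variables (P : probability T R) (d m N : nat) (rho L1 L2 L3 L4 K2 q : R).
Variables (X : 'I_m -> T -> R) (F : 'rV[R]_d -> 'rV[R]_m -> 'rV[R]_d)
  (gdot : 'I_N -> 'rV[R]_d -> 'rV[R]_m -> 'rV[R]_d)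
  (I : 'I_m -> 'I_N -> iform R d) (M : 'I_m -> R) (K : 'I_m -> 'I_N -> R).
Hypothesis mX : forall i, measurable_fun setT (X i).
Hypothesis rho_ge0 : 0 <= rho.
Hypothesis L1_ge0 : 0 <= L1.
Hypothesis L3_ge0 : 0 <= L3.
Hypothesis K2_ge0 : 0 <= K2.
Hypothesis F_lip : forall t t' x x',
  enorm (F t x - F t' x') <=
  (1 + enorm x + enorm x') `^ rho * (L1 * enorm (t - t') + L2 * enorm (x - x')).
Hypothesis gdot_lip : forall j t t' x x',
  enorm (gdot j t x - gdot j t' x') <=
  (1 + enorm x + enorm x') `^ rho * (L3 * enorm (t - t') + L4 * enorm (x - x')).
Hypothesis gdot_bounded : forall j t x, enorm (gdot j t x) <= K2.
Hypothesis M_ge0 : forall i, 0 <= M i.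
Hypothesis X_segment : forall i a b, a <= b ->
  (P (X i @^-1` `[a, b]%classic) <= (M i * (b - a))%:E)%E.
Hypothesis K_ge0 : forall i j, 0 <= K i j.
Hypothesis bnd_lip : forall i j b t t',
  `|iform_bnd b (I i j) t - iform_bnd b (I i j) t'| <= K i j * enorm (t - t').
Hypothesis moment : (\int[P]_w (enorm (\row_i X i w) `^ rho)%:E)%E = q%:E.

Definition mean_lipschitz_constant : R :=
  d%:R * (L1 + N%:R * L3) * 3 `^ rho * (1 + q) +
  d%:R * K2 * (2 * \sum_(j < N) \sum_(i < m) M i * K i j).

Lemma mean_lipschitz_constant_ge0 : 0 <= mean_lipschitz_constant.
Proof.
have q_ge0 : 0 <= q.
  by rewrite -lee_fin -moment; apply: integral_ge0 => w _; rewrite lee_fin powR_ge0.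
have S_ge0 : 0 <= \sum_(j < N) \sum_(i < m) M i * K i j.
  by do 2!(apply: sumr_ge0 => ? _); rewrite mulr_ge0.
by rewrite /mean_lipschitz_constant addr_ge0 // !mulr_ge0 ?powR_ge0 ?addr_ge0 ?mulr_ge0.
Qed.

Lemma mean_increment_bound t t' :
  (\int[P]_w (enorm ((F t (\row_i X i w) + Gfun gdot I t (\row_i X i w))
                   - (F t' (\row_i X i w) + Gfun gdot I t' (\row_i X i w))))%:E
    <= (mean_lipschitz_constant * enorm (t - t'))%:E)%E.
Proof.
set A := d%:R * (L1 + N%:R * L3) * 3 `^ rho; set dl := enorm (t - t').
have A_ge0 : 0 <= A by rewrite /A !mulr_ge0 ?powR_ge0 ?addr_ge0 ?mulr_ge0.
have dl_ge0 : 0 <= dl by exact: enorm_ge0.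
apply: le_trans (ge0_le_integral_nomeas P (f2 := fun w =>
  (A * dl * (1 + enorm (\row_i X i w) `^ rho) +
   d%:R * K2 * crossings I t t' (\row_i X i w))%:E) _ _) _.
- by move=> w; rewrite lee_fin enorm_ge0.
- move=> w; rewrite lee_fin; exact: increment_bound.
apply: le_trans (expectation_dominator mX (mulr_ge0 A_ge0 dl_ge0) (mulr_ge0 (ler0n _ _) K2_ge0)
  moment (fun i j b => swept_probability (X_segment i) (M_ge0 i) (bnd_lip i j b) t t')) _.
have -> : \sum_(j < N) \sum_(i < m) M i * K i j * enorm (t - t') =
  (\sum_(j < N) \sum_(i < m) M i * K i j) * dl.
  by rewrite mulr_suml; apply: eq_bigr => j _; rewrite mulr_suml.
by rewrite lee_fin le_eqVlt; apply/orP; left; apply/eqP; rewrite /mean_lipschitz_constant -/A; ring.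
Qed.

End MeanIncrement.

Unset Implicit Arguments.

Theorem mainTheorem7 (R : realType) (dT : measure_display)
  (T : measurableType dT) (P : probability T R)
  (d m N : nat) (rho L1 L2 L3 L4 K2 : R)
  (X : 'I_m -> T -> R)
  (F : 'rV[R]_d -> 'rV[R]_m -> 'rV[R]_d)
  (gdot : 'I_N -> 'rV[R]_d -> 'rV[R]_m -> 'rV[R]_d)
  (I : 'I_m -> 'I_N -> iform R d) :
  (* coordinates of X_0 are random variables *)
  (forall i, measurable_fun setT (X i)) ->
  (* (A1) *)
  0 < L1 -> 0 < L2 -> 0 <= rho ->
  (forall t t' x x',
     enorm (F t x - F t' x') <=
     (1 + enorm x + enorm x') `^ rho * (L1 * enorm (t - t') + L2 * enorm (x - x'))) ->
  (* assumptions on G *)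
  (0 < N)%N ->
  0 < L3 -> 0 < L4 -> 0 < K2 ->
  (forall j t t' x x',
     enorm (gdot j t x - gdot j t' x') <=
     (1 + enorm x + enorm x') `^ rho * (L3 * enorm (t - t') + L4 * enorm (x - x'))) ->
  (forall j t x, enorm (gdot j t x) <= K2) ->
  (forall i j, iform_lipschitz (I i j)) ->
  (* G is lower semi-continuous (each coordinate, jointly in (theta, x)) *)
  (forall k : 'I_d, lower_semicontinuous
     (fun z : 'rV[R]_d * 'rV[R]_m => ((Gfun gdot I z.1 z.2) ord0 k)%:E)) ->
  (* E |X_0|^rho < oo *)
  (\int[P]_w ((enorm (\row_i X i w)) `^ rho)%:E < +oo)%E ->
  (* each coordinate X_0^(i) has a continuous and bounded density *)
  (forall i, exists f : R -> R,
     [/\ continuous f, (exists M : R, forall y, `|f y| <= M),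
         (forall y, 0 <= f y) &
         forall A : set R, measurable A ->
           P (X i @^-1` A) = (\int[lebesgue_measure]_(y in A) (f y)%:E)%E]) ->
  exists L : R, 0 < L /\
    forall t t' : 'rV[R]_d,
      (\int[P]_w (enorm ((F t (\row_i X i w) + Gfun gdot I t (\row_i X i w))
                       - (F t' (\row_i X i w) + Gfun gdot I t' (\row_i X i w))))%:E
        <= (L * enorm (t - t'))%:E)%E.
Proof.
move=> mX L1_gt0 _ rho_ge0 F_lip _ L3_gt0 _ K2_gt0 gdot_lip gdot_bounded I_lip _
  moment_finite density.
have /choice [M M_spec] : forall i, exists Mi, 0 <= Mi /\ forall a b, a <= b ->
    (P (X i @^-1` `[a, b]%classic) <= (Mi * (b - a))%:E)%E.
  move=> i; have [f [f_cont [Mi f_le] f_ge0 f_density]] := density i.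
  exists Mi; split; first exact: le_trans (normr_ge0 _) (f_le 0).
  exact: density_itv_bound f_cont f_ge0 f_le f_density.
have /choice [K K_spec] : forall ij : 'I_m * 'I_N, exists Kij, 0 <= Kij /\
    forall b t t', `|iform_bnd b (I ij.1 ij.2) t - iform_bnd b (I ij.1 ij.2) t'| <=
                   Kij * enorm (t - t').
  by move=> [i j]; exact: iform_lipschitz_bnd (I_lip i j).
set moment := (\int[P]_w ((enorm (\row_i X i w)) `^ rho)%:E)%E.
have moment_fin : moment = (fine moment)%:E.
  by rewrite fineK // ge0_fin_numE // integral_ge0 // => w _; rewrite lee_fin powR_ge0.
set C := @mean_lipschitz_constant R d m N rho L1 L3 K2 (fine moment) M (fun i j => K (i, j)).
have C_ge0 : 0 <= C.
  apply: mean_lipschitz_constant_ge0 moment_fin => [|||i|i j];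
    [exact: ltW.. | exact: (M_spec i).1 | exact: (K_spec (i, j)).1].
exists (1 + C); split; first by rewrite ltr_wpDr.
move=> t t'; apply: le_trans (mean_increment_bound mX rho_ge0 (ltW L1_gt0) (ltW L3_gt0)
  (ltW K2_gt0) F_lip gdot_lip gdot_bounded (fun i => (M_spec i).1) (fun i => (M_spec i).2)
  (fun i j => (K_spec (i, j)).2) moment_fin t t') _.
by rewrite lee_fin ler_wpM2r ?enorm_ge0 // lerDr.
Qed.
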